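(* For any tree $T$, there exists a non-empty elementary minor of $T$ with the same spectator floor as $T$ if and only if there exists an edge $e$ of $T$ such that contracting $e$ reduces the diameter of $T$.
   Context: All graphs are finite, have no loops, and may have multiple (parallel) edges. A minor of $H$ is any graph obtained from $H$ by a sequence of: deleting an isolated vertex, deleting an edge, contracting an edge that has no edge parallel to it; an elementary minor is one obtained by exactly one such operation. A unique shortest path is a shortest $u$–$v$ path $P$ such that every $u$–$v$ path with the same number of vertices is identical to $P$, where two paths with different edge sequences are different even if their vertex sequences agree; a single vertex is a unique shortest path. The parade number $\mathrm{usp}(G)$ is the largest number of vertices of a unique shortest path in $G$. The spectator number is $\mathrm{sp}(G)=|V(G)|-\mathrm{usp}(G)$. The spectator floor $\lfloor \mathrm{sp}\rfloor(G)$ is the minimum of $\mathrm{sp}(H)$ over all graphs $H$ of which $G$ is a minor. *)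

From Stdlib Require Import ClassicalEpsilon.
From mathcomp Require Import all_boot.
Set Implicit Arguments. Unset Strict Implicit. Unset Printing Implicit Defensive.

(* A finite loopless multigraph: vertex type, edge type, and the two ends of
   each edge (orientation is irrelevant, see [joins]). *)
Record mgraph := MGraph {
  gV : finType;
  gE : finType;
  gsrc : gE -> gV;
  gdst : gE -> gV;
  gnoloop : forall e, gsrc e != gdst e }.

Definition cdec (P : Prop) : bool :=
  if excluded_middle_informative P then true else false.

Lemma cdecT (P : Prop) : P -> cdec P.
Proof. by rewrite /cdec; case: excluded_middle_informative. Qed.

Definition joins (G : mgraph) (e : gE G) (a b : gV G) : bool :=
  ((gsrc e == a) && (gdst e == b)) || ((gsrc e == b) && (gdst e == a)).

Definition iso (G H : mgraph) : Prop :=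
  exists (fv : gV G -> gV H) (fe : gE G -> gE H),
    [/\ bijective fv, bijective fe &
        forall e, joins (fe e) (fv (gsrc e)) (fv (gdst e))].

Definition del_isolated_vertex (G' G : mgraph) : Prop :=
  exists (v : gV G) (fv : gV G' -> gV G) (fe : gE G' -> gE G),
    (forall e : gE G, (gsrc e != v) && (gdst e != v)) /\
    [/\ injective fv, forall x, fv x != v,
        forall y, y != v -> exists x, fv x = y,
        bijective fe &
        forall e', joins (fe e') (fv (gsrc e')) (fv (gdst e'))].

Definition del_edge (G' G : mgraph) (e0 : gE G) : Prop :=
  exists (fv : gV G' -> gV G) (fe : gE G' -> gE G),
    [/\ bijective fv, injective fe, forall e', fe e' != e0,
        forall e, e != e0 -> exists e', fe e' = e &
        forall e', joins (fe e') (fv (gsrc e')) (fv (gdst e'))].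

(* G' is obtained from G by contracting the edge e0, which must have no
   edge parallel to it: the ends x,y of e0 are identified, e0 is removed,
   all other edges are kept with their ends mapped. *)
Definition contract_edge (G' G : mgraph) (e0 : gE G) : Prop :=
  (forall e, e != e0 -> ~~ joins e (gsrc e0) (gdst e0)) /\
  exists (fv : gV G -> gV G') (fe : gE G' -> gE G),
    (forall y, exists x, fv x = y) /\
    (forall a b, fv a = fv b <->
          (a = b \/ (a = gsrc e0 /\ b = gdst e0) \/ (a = gdst e0 /\ b = gsrc e0))) /\
    [/\ injective fe, forall e', fe e' != e0,
        forall e, e != e0 -> exists e', fe e' = e &
        forall e', joins e' (fv (gsrc (fe e'))) (fv (gdst (fe e')))].

Definition elem_minor (G' G : mgraph) : Prop :=
  del_isolated_vertex G' G \/ (exists e0, @del_edge G' G e0)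
  \/ (exists e0, @contract_edge G' G e0).

Inductive minor : mgraph -> mgraph -> Prop :=
| minor_iso G H : iso G H -> minor G H
| minor_step G K H : elem_minor G K -> minor K H -> minor G H.

(* a u-v path: distinct vertices vs = [u; ...; v], consecutive ones joined
   by the corresponding edge of es *)
Definition is_path (G : mgraph) (u v : gV G) (vs : seq (gV G)) (es : seq (gE G))
  : bool :=
  [&& size vs == (size es).+1, uniq vs, head u vs == u, last u vs == v &
      all (fun p => joins p.1 p.2.1 p.2.2) (zip es (zip vs (behead vs)))].

(* unique shortest u-v path (paths compared as vertex AND edge sequences) *)
Definition usp_path (G : mgraph) (u v : gV G) (vs : seq (gV G)) (es : seq (gE G))
  : Prop :=
  is_path u v vs es /\
  forall vs' es', is_path u v vs' es' ->
    size vs <= size vs' /\ (size vs' = size vs -> vs' = vs /\ es' = es).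

(* parade number: largest number of vertices of a unique shortest path *)
Definition usp (G : mgraph) : nat :=
  \max_(n < #|gV G|.+1 |
        cdec (exists u v vs es, @usp_path G u v vs es /\ size vs = n)) n.

Definition sp (G : mgraph) : nat := #|gV G| - usp G.

Lemma spfloor_ex (G : mgraph) :
  exists n, cdec (exists H, minor G H /\ sp H = n).
Proof.
exists (sp G); apply: cdecT; exists G; split => //; apply: minor_iso.
by exists id, id; split; try exists id => //; move=> e; rewrite /joins !eqxx.
Qed.

Definition spfloor (G : mgraph) : nat := ex_minn (spfloor_ex G).

(* distance (number of edges of a shortest path); all graphs where it is
   used below are connected *)
Definition dist (G : mgraph) (u v : gV G) : nat :=
  \big[minn/#|gV G|]_(n < #|gV G| |
       cdec (exists vs es, @is_path G u v vs es /\ size es = n)) n.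

Definition diam (G : mgraph) : nat :=
  \max_(u : gV G) \max_(v : gV G) dist u v.

Definition connected (G : mgraph) : Prop :=
  forall u v : gV G, exists vs es, @is_path G u v vs es.

(* a cycle: k >= 2 distinct vertices v_0..v_(k-1) and k distinct edges,
   edge i joining v_i and v_(i+1 mod k) *)
Definition is_cycle (G : mgraph) (vs : seq (gV G)) (es : seq (gE G)) : Prop :=
  exists v0 : gV G,
  [/\ 2 <= size vs, size es = size vs, uniq vs, uniq es &
      all (fun p => joins p.1 p.2.1 p.2.2)
          (zip es (zip vs (rcons (behead vs) (head v0 vs))))].

Definition acyclic (G : mgraph) : Prop := forall vs es, ~ @is_cycle G vs es.

Definition is_tree (G : mgraph) : Prop :=
  0 < #|gV G| /\ connected G /\ acyclic G.

(* Let G be a minor of H.  A unique shortest path of H is a geodesic, and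
   along every elementary operation a family of geodesics lying in distinct
   components can be followed so that it loses at most as many vertices as
   the graph does: deleting an edge splits a geodesic into two geodesics of
   different components, deleting an isolated vertex or contracting an edge
   costs one vertex.  In a connected graph such a family has at most
   diam + 1 vertices, whence |V(G)| <= sp(H) + diam(G) + 1.  In a tree every
   path is a unique shortest path, so the spectator floor of a tree T is
   exactly |V(T)| - diam(T) - 1, and the same holds for T/e.
   Hence contracting e preserves the floor iff it lowers the diameter, and
   deleting a vertex leaves the empty graph.  Deleting an edge e preserves
   the floor only if every path of T - e is shorter than diam(T): otherwise
   re-attaching e at the end of a long path gives a graph with a longer
   unique shortest path having T - e as a minor.  But then contracting e
   lowers the diameter. *)

From mathcomp Require Import all_boot zify.
From Stdlib Require Import ClassicalEpsilon.
Set Implicit Arguments. Unset Strict Implicit. Unset Printing Implicit Defensive.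

Lemma cdecP (P : Prop) : reflect P (cdec P).
Proof. by rewrite /cdec; case: excluded_middle_informative => H; constructor. Qed.

Section Geodesics.
Variables (V : finType) (R : rel V).
Implicit Types (u v x y z : V) (p q : seq V).

Lemma path_connect_last x p : path R x p -> connect R x (last x p).
Proof. by move=> Pp; apply/connectP; exists p. Qed.

Definition geodesic u p v := [/\ path R u p, last u p = v, uniq (u :: p) &
  forall q, path R u q -> last u q = v -> size p <= size q].

Lemma geodesic_exists u v : connect R u v -> exists p, geodesic u p v.
Proof.
move=> /connectP[p0 Pp0 Lp0].
have exP : exists n, cdec (exists p, [/\ path R u p, last u p = v & size p = n]).
  by exists (size p0); apply/cdecP; exists p0.
case: (ex_minnP exP) => _ /cdecP[p [Pp Lp <-]] min_p.
case: (shortenP Pp) Lp => q Pq Uq sub_qp Lq.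
exists q; split=> // q' Pq' Lq'; have /andP[_ Uq'] := Uq.
apply: leq_trans (uniq_leq_size Uq' sub_qp) (min_p _ _).
by apply/cdecP; exists q'.
Qed.

Lemma geodesic_connect u p v : geodesic u p v -> connect R u v.
Proof. by case=> Pp <- _ _; apply: path_connect_last. Qed.

Lemma geodesic_catl u p1 y p2 v :
  geodesic u (p1 ++ y :: p2) v -> geodesic u p1 (last u p1).
Proof.
case; rewrite cat_path last_cat -cat_cons cat_uniq => /andP[P1 P2] Lp /and3P[U1 _ _] min_p.
split=> // q Pq Lq; have := min_p (q ++ y :: p2).
by rewrite cat_path last_cat Lq P2 Pq Lp !size_cat leq_add2r; apply.
Qed.

Lemma geodesic_catr u p1 y p2 v :
  geodesic u (p1 ++ y :: p2) v -> geodesic y p2 v.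
Proof.
case; rewrite cat_path last_cat -cat_cons cat_uniq /= => /andP[P1 /andP[R1 P2]] Lp.
move=> /and3P[_ _ U2] min_p; split=> // q Pq Lq; have := min_p (p1 ++ y :: q).
by rewrite cat_path /= last_cat /= Lq P1 R1 Pq !size_cat leq_add2l ltnS; apply.
Qed.

Definition avoids (s : seq (V * seq V)) z := all (fun e => ~~ connect R e.1 z) s.

(* Geodesics [u :: p] lying in pairwise distinct components (for symmetric [R]). *)
Fixpoint geodesic_system (s : seq (V * seq V)) : Prop :=
  if s is (u, p) :: s' then
    [/\ geodesic u p (last u p), avoids s' u & geodesic_system s']
  else True.

Lemma geodesic_system_mem s u p :
  geodesic_system s -> (u, p) \in s -> geodesic u p (last u p).
Proof.
elim: s => //= [[w r]] s IH [geo_r _ /IH geo_s].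
by rewrite inE => /orP[/eqP[-> ->] | /geo_s].
Qed.

End Geodesics.

Definition system_weight (V : Type) (s : seq (V * seq V)) :=
  sumn [seq (size e.2).+1 | e <- s].

Lemma geodesic_subrel (V : finType) (R R' : rel V) u p v :
  subrel R' R -> geodesic R u p v -> path R' u p -> geodesic R' u p v.
Proof.
by move=> sR [_ Lp Up min_p] P'p; split=> // q /(sub_path sR); apply: min_p.
Qed.

Lemma geodesic_subrel_size (V : finType) (R R' : rel V) u p q v :
  subrel R' R -> geodesic R u p v -> geodesic R' u q v -> size p <= size q.
Proof. by move=> sR [_ _ _ min_p] [/(sub_path sR) Pq Lq _ _]; apply: min_p. Qed.

Section RemovePair.
Variables (V : finType) (R R' : rel V) (a b : V).
Hypotheses (symR : symmetric R) (symR' : symmetric R') (subR : subrel R' R).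
Hypothesis R_minus_R' : forall x y, R x y -> ~~ R' x y ->
  ((x == a) && (y == b)) || ((x == b) && (y == a)).

Lemma path_first_removed x p : path R x p -> ~~ path R' x p ->
  exists p1 y p2, [/\ p = p1 ++ y :: p2, path R' x p1,
                      R (last x p1) y & ~~ R' (last x p1) y].
Proof.
elim: p x => [|y p IH] x //= /andP[Rxy Pp].
case R'xy: (R' x y) => /= notP'; last by exists [::], y, p; rewrite /= R'xy.
have [p1 [z [p2 [-> P1 R1 N1]]]] := IH y Pp notP'.
by exists (y :: p1), z, p2; rewrite /= R'xy.
Qed.

Lemma path_avoiding_pair x p :
  path R x p -> ~~ ((a \in x :: p) && (b \in x :: p)) -> path R' x p.
Proof.
elim: p x => [|y p IH] x //= /andP[Rxy Pp] not_ab.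
case R'xy: (R' x y) => /=.
  by apply: IH => //; apply: contra not_ab; rewrite !inE => /andP[-> ->]; rewrite !orbT.
move: not_ab; have := R_minus_R' Rxy; rewrite R'xy => /(_ isT).
by case/orP=> /andP[/eqP-> /eqP->]; rewrite !inE !eqxx ?orbT.
Qed.

Let connect_R'R : subrel (connect R') (connect R).
Proof. by apply: connect_sub => x y /subR; apply: connect1. Qed.

Lemma geodesic_break u p : geodesic R u p (last u p) -> ~~ connect R' u (last u p) ->
  exists p1 y p2, [/\ size p = size p1 + (size p2).+1, geodesic R' u p1 (last u p1),
                      geodesic R' y p2 (last u p) & connect R u y].
Proof.
move=> geo_p NCuv; have [Pp _ Up _] := geo_p.
have [p1 [y [p2 [Ep P1 Rxy NR'xy]]]] := path_first_removed Pp
  (contra (@path_connect_last _ _ _ _) NCuv).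
rewrite Ep last_cat /= in geo_p *; rewrite Ep in Up; set x := last u p1 in Rxy NR'xy.
have P2 : path R' y p2.
  have [+ _ _ _] := geo_p; rewrite cat_path => /andP[_ /= /andP[_ P2R]].
  apply: path_avoiding_pair => //; have x_u : x \in u :: p1 by apply: mem_last.
  have x_notin : x \notin y :: p2.
    move: Up; rewrite -cat_cons cat_uniq => /and3P[_ /hasPn disj _].
    by apply/negP => /disj; rewrite x_u.
  by case/orP: (R_minus_R' Rxy NR'xy) => /andP[/eqP<- _]; rewrite (negbTE x_notin) ?andbF.
exists p1, y, p2; split.
- by rewrite size_cat.
- exact: geodesic_subrel (geodesic_catl geo_p) P1.
- exact: geodesic_subrel (geodesic_catr geo_p) P2.
- exact: connect_trans (path_connect_last (sub_path subR P1)) (connect1 Rxy).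
Qed.

(* A geodesic of R either stays connected in R', where a geodesic is at
   least as long, or breaks at the removed pair into two geodesics of R'
   lying in distinct components. *)
Lemma geodesic_system_remove_pair s : geodesic_system R s ->
  exists s', [/\ geodesic_system R' s', system_weight s <= system_weight s' &
                 forall z, avoids R s z -> avoids R' s' z].
Proof.
have symC := sym_connect_sym symR; have symC' := sym_connect_sym symR'.
elim: s => [|[u p] s IH] /=; first by exists [::].
case=> geo_p avoid_u /IH[s0 [sys_s0 W0 avoid0]].
have avoid0_u := avoid0 u avoid_u.
case: (boolP (connect R' u (last u p))) => [Cuv | NCuv].
  have [q geo_q] := geodesic_exists Cuv.
  exists ((u, q) :: s0); split => /=.
  - by case: (geo_q) => _ -> _ _.
  - have := geodesic_subrel_size subR geo_p geo_q.
    by move: W0; rewrite /system_weight /=; lia.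
  - move=> z /andP[Nuz Az]; rewrite (avoid0 z Az) andbT.
    by apply: contra Nuz; apply: connect_R'R.
have [p1 [y [p2 [Sp geo_p1 geo_p2 Cuy]]]] := geodesic_break geo_p NCuv.
exists ((u, p1) :: (y, p2) :: s0); split => /=.
- split; [done | | split].
  + rewrite /= avoid0_u andbT; apply: contra NCuv => Cyu; rewrite symC' in Cyu.
    exact: connect_trans Cyu (geodesic_connect geo_p2).
  + by case: (geo_p2) => _ -> _ _.
  + apply: avoid0; apply: sub_all avoid_u => e /=; apply: contra => Cey.
    by apply: connect_trans Cey _; rewrite symC.
  + done.
- by rewrite /system_weight /= Sp; move: W0; rewrite /system_weight; lia.
- move=> z /andP[Nuz Az]; rewrite (avoid0 z Az) !andbT.
  by apply/andP; split; apply: contra Nuz => /connect_R'R //; apply: connect_trans.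
Qed.

End RemovePair.

Section Pullback.
Variables (V1 V2 : finType) (f : V1 -> V2) (R1 : rel V1) (R2 : rel V2).
Hypothesis f_rel : forall x y, R1 x y = R2 (f x) (f y).
Hypothesis f_closed : forall x y2, R2 (f x) y2 -> exists y, f y = y2.

Lemma path_map_rel x p : path R2 (f x) (map f p) = path R1 x p.
Proof. by elim: p x => //= y p IH x; rewrite f_rel IH. Qed.

Lemma connect_map_rel x y : connect R1 x y -> connect R2 (f x) (f y).
Proof.
move=> /connectP[p Pp ->]; apply/connectP; exists (map f p); last by rewrite last_map.
by rewrite path_map_rel.
Qed.

Lemma path_preimage x p2 : path R2 (f x) p2 -> exists p, map f p = p2.
Proof.
elim: p2 x => [|y2 p2 IH] x /=; first by exists [::].
case/andP=> /f_closed[y <-] /IH[p <-]; by exists (y :: p).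
Qed.

Lemma geodesic_pullback u p :
  geodesic R2 (f u) (map f p) (f (last u p)) -> geodesic R1 u p (last u p).
Proof.
case; rewrite path_map_rel -map_cons => Pp _ /(map_uniq (f := f)) Up min_p.
split=> // q Pq Lq; rewrite -(size_map f p) -(size_map f q) min_p ?path_map_rel //.
by rewrite last_map Lq.
Qed.

Lemma geodesic_system_pullback s2 : geodesic_system R2 s2 ->
  {subset map fst s2 <= codom f} ->
  exists s, [/\ geodesic_system R1 s, system_weight s = system_weight s2 &
                map (f \o fst) s = map fst s2].
Proof.
elim: s2 => [|[u2 p2] s2 IH] /=; first by exists [::].
case=> geo_p2 avoid_u2 /IH sys2 sub2; have /codomP[u Eu] := sub2 u2 (mem_head _ _).
have [x x_s2|s [sys_s W EM]] := sys2; first by apply: sub2; rewrite inE x_s2 orbT.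
have [Pp2 Lp2 _ _] := geo_p2; rewrite Eu in Pp2.
have [p Ep] := path_preimage Pp2; subst u2 p2.
exists ((u, p) :: s); split => /=.
- split.
  + by apply: geodesic_pullback; rewrite -last_map.
  + have : all (fun h => ~~ connect R2 h (f u)) (map fst s2) by rewrite all_map.
    rewrite -EM all_map; apply: sub_all => e /=; apply: contra; exact: connect_map_rel.
  + done.
- by rewrite /system_weight /= size_map; move: W; rewrite /system_weight => ->.
- by rewrite EM.
Qed.

End Pullback.

Lemma geodesic_system_filter (V : finType) (R : rel V) (P : pred (V * seq V)) s :
  geodesic_system R s -> geodesic_system R (filter P s).
Proof.
elim: s => //= [[u p]] s IH [geo_p avoid_u /IH sys_s]; case: ifP => //= _.
by split=> //; rewrite /avoids all_filter; apply: sub_all avoid_u => e /= ->; rewrite implybT.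
Qed.

Lemma geodesic_system_drop_isolated (V : finType) (R : rel V) v0 s :
  (forall y, ~~ R v0 y) -> geodesic_system R s ->
  exists s', [/\ geodesic_system R s', system_weight s <= (system_weight s').+1 &
                 all (fun e => e.1 != v0) s'].
Proof.
move=> isolated sys_s; exists (filter (fun e => e.1 != v0) s); split.
- exact: geodesic_system_filter.
- elim: s sys_s => //= [[u p]] s IH [[Pp _ _ _] avoid_u /IH W].
  case: (eqVneq u v0) => [Eu|_]; rewrite /system_weight /= in W *; last by lia.
  have -> : p = [::] by case: p Pp => //= y p; rewrite Eu (negbTE (isolated y)).
  suff -> : filter (fun e => e.1 != v0) s = s.
    by rewrite /system_weight.
  apply/all_filterP; apply: sub_all avoid_u => e /=; apply: contra => /eqP->.
  by rewrite Eu.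
- exact: filter_all.
Qed.

Section Contraction.
Variables (V1 V2 : finType) (f : V1 -> V2) (R1 : rel V1) (R2 : rel V2) (a b : V1).
Hypotheses (symR1 : symmetric R1) (symR2 : symmetric R2).
Hypothesis f_rel : forall x y, R1 x y -> f x = f y \/ R2 (f x) (f y).
Hypothesis f_lift : forall x' y', R2 x' y' -> exists x y, [/\ f x = x', f y = y' & R1 x y].
Hypotheses (Rab : R1 a b) (fab : f a = f b).
Hypothesis f_fibre : forall x y, f x = f y -> x = y \/ (x = a /\ y = b) \/ (x = b /\ y = a).

(* Each passage through the contracted vertex [f a] costs at most one extra step. *)
Lemma path_lift u' q : path R2 u' q -> forall u v, f u = u' -> f v = last u' q ->
  exists p, [/\ path R1 u p, last u p = v & size p <= size q + count_mem (f a) (u' :: q)].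
Proof.
elim: q u' => [|y' q IH] u' /=.
  move=> _ u v <- /esym/f_fibre.
  case=> [<-|[[-> ->]|[-> ->]]]; first by exists [::].
    by exists [:: b]; rewrite /= Rab eqxx.
  by exists [:: a]; rewrite /= symR1 Rab fab eqxx.
case/andP=> /f_lift[x [y [<- <- Rxy]]] Pq u v Eu Ev.
have [p [Pp Lp Sp]] := IH _ Pq y v erefl Ev.
have /f_fibre : f u = f x by [].
case=> [-> | ux_ab].
  by exists (y :: p); rewrite /= Rxy Pp Lp; split=> //; move: Sp => /=; lia.
have Rux : R1 u x by case: ux_ab => [][-> ->]; rewrite // symR1.
have fx : f x = f a by case: ux_ab => [][_ ->]; rewrite // fab.
exists (x :: y :: p); rewrite /= Rux Rxy Pp Lp fx eqxx; split=> //.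
by move: Sp => /=; lia.
Qed.

Lemma path_image x p : path R1 x p -> exists q, [/\ path R2 (f x) q,
  last (f x) q = f (last x p), size q <= size p &
  (~~ path (fun s t => f s != f t) x p -> size q < size p)].
Proof.
elim: p x => [|y p IH] x /=; first by exists [::].
case/andP=> Rxy /IH[q [Pq Lq Sq Tq]].
case: (eqVneq (f x) (f y)) => [->|fxy]; first by exists q; split=> //; apply: leqW.
have R2xy : R2 (f x) (f y) by case: (f_rel Rxy) => // E; rewrite E eqxx in fxy.
by exists (f y :: q); rewrite /= R2xy Pq Lq.
Qed.

Lemma connect_image x y : connect R1 x y -> connect R2 (f x) (f y).
Proof.
move=> /connectP[p Pp ->]; have [q [Pq Lq _ _]] := path_image Pp.
by apply/connectP; exists q.
Qed.

Lemma connect_preimage x y : connect R2 (f x) (f y) -> connect R1 x y.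
Proof.
move=> /connectP[q Pq Lq]; have [p [Pp Lp _]] := path_lift Pq erefl Lq.
by apply/connectP; exists p.
Qed.

(* Only the component containing the contracted vertex can lose weight. *)
Lemma geodesic_system_contract s : geodesic_system R1 s ->
  exists s', [/\ geodesic_system R2 s',
    system_weight s <= system_weight s' + has (fun e => f a \in e.1 :: e.2) s' &
    forall z, avoids R1 s z -> avoids R2 s' (f z)].
Proof.
have symC2 := sym_connect_sym symR2.
elim: s => [|[u p] s IH] /=; first by exists [::].
case=> geo_p avoid_u /IH[s0 [sys_s0 W0 avoid0]].
have avoid0_u := avoid0 u avoid_u.
have [q geo_q] := geodesic_exists (connect_image (geodesic_connect geo_p)).
have [Pq Lq Uq _] := geo_q.
have [p' [Pp' Lp' Sp']] := path_lift Pq erefl (esym Lq).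
have [_ _ _ min_p] := geo_p; have {Pp' Lp'}Sp := min_p p' Pp' Lp'.
exists ((f u, q) :: s0); split => /=.
- by rewrite Lq.
- rewrite (count_uniq_mem _ Uq) in Sp'.
  have : ~~ ((f a \in f u :: q) && has (fun e => f a \in e.1 :: e.2) s0).
    apply/negP => /andP[aq /hasP[[w r] wr /= ar]].
    have [Pr _ _ _] := geodesic_system_mem sys_s0 wr.
    have := allP avoid0_u _ wr; rewrite /=; apply/negP/negPn.
    by apply: connect_trans (path_connect Pr ar) _; rewrite symC2 (path_connect Pq aq).
  rewrite /system_weight /= in W0 *.
  by move: Sp' W0 Sp; case: (f a \in f u :: q); case: has => /=; lia.
- move=> z /andP[Nuz Az]; rewrite (avoid0 z Az) andbT.
  by apply: contra Nuz; apply: connect_preimage.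
Qed.

End Contraction.

Lemma bigmin_le_cond (I : eqType) (r : seq I) (P : pred I) (F : I -> nat) N j :
  j \in r -> P j -> \big[minn/N]_(i <- r | P i) F i <= F j.
Proof.
elim: r => // i r IH; rewrite inE big_cons => /orP[/eqP<- -> | jr Pj].
  exact: geq_minl.
by case: ifP => _; [apply: leq_trans (geq_minr _ _) _|]; apply: IH.
Qed.

Section Adjacency.
Variable G : mgraph.
Implicit Types (x y u v : gV G) (p q : seq (gV G)) (e : gE G) (es : seq (gE G)).

Definition adj : rel (gV G) := fun x y => [exists e, joins e x y].
Definition adj_del e0 : rel (gV G) := fun x y => [exists e, (e != e0) && joins e x y].

Lemma joinsC e x y : joins e x y = joins e y x.
Proof. by rewrite /joins orbC. Qed.

Lemma joins_ends e : joins e (gsrc e) (gdst e).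
Proof. by rewrite /joins !eqxx. Qed.

Lemma adj_sym : symmetric adj.
Proof. by move=> x y; apply/existsP/existsP => -[e]; exists e; rewrite joinsC. Qed.

Lemma adj_del_sym e0 : symmetric (adj_del e0).
Proof. by move=> x y; apply/existsP/existsP => -[e]; exists e; rewrite joinsC. Qed.

Lemma adj_ends e : adj (gsrc e) (gdst e).
Proof. by apply/existsP; exists e; apply: joins_ends. Qed.

Fixpoint ewalk x p es : bool :=
  match p, es with
  | [::], [::] => true
  | y :: p', e :: es' => joins e x y && ewalk y p' es'
  | _, _ => false
  end.

Lemma ewalk_size x p es : ewalk x p es -> size p = size es.
Proof. by elim: p x es => [|y p IH] x [|e es] //= /andP[_ /IH ->]. Qed.

Lemma ewalk_path x p es : ewalk x p es -> path adj x p.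
Proof.
elim: p x es => [|y p IH] x [|e es] //= /andP[J /IH ->].
by rewrite andbT; apply/existsP; exists e.
Qed.

Lemma path_ewalk x p : path adj x p -> exists es, ewalk x p es.
Proof.
elim: p x => [|y p IH] x /=; first by exists [::].
by case/andP=> /existsP[e J] /IH[es E]; exists (e :: es); rewrite /= J.
Qed.

Lemma ewalk_path_del e0 x p es : ewalk x p es -> e0 \notin es -> path (adj_del e0) x p.
Proof.
elim: p x es => [|y p IH] x [|e es] //= /andP[J E]; rewrite inE negb_or => /andP[ne N].
by rewrite (IH _ _ E N) andbT; apply/existsP; exists e; rewrite eq_sym ne J.
Qed.

Lemma path_del_ewalk e0 x p :
  path (adj_del e0) x p -> exists2 es, ewalk x p es & e0 \notin es.
Proof.
elim: p x => [|y p IH] x /=; first by exists [::].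
case/andP=> /existsP[e /andP[ne J]] /IH[es E N]; exists (e :: es).
  by rewrite /= J E.
by rewrite inE negb_or eq_sym ne.
Qed.

Lemma is_pathP u v vs es : reflect
  (exists p, [/\ vs = u :: p, ewalk u p es, uniq (u :: p) & last u p = v])
  (is_path u v vs es).
Proof.
have zip_ewalk x p es' : size p = size es' ->
    all (fun t => joins t.1 t.2.1 t.2.2) (zip es' (zip (x :: p) p)) = ewalk x p es'.
  by elim: p x es' => [|y p IH] x [|e es'] //= [/IH ->].
apply: (iffP idP) => [|[p [-> E U L]]]; last first.
  by apply/and5P; rewrite /= zip_ewalk ?(ewalk_size E) // -/(uniq (u :: p)) U L E !eqxx.
case: vs => [|x p] /and5P[] //= /eqP[Ss] U /eqP Hx /eqP Lv A; subst x.
by exists p; rewrite -zip_ewalk.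
Qed.

Lemma ewalk_rcons x p es y f :
  ewalk x (rcons p y) (rcons es f) = ewalk x p es && joins f (last x p) y.
Proof.
elim: p x es => [|z p IH] x [|g es] //=.
- by rewrite andbT.
- by case: es => [|? ?]; rewrite /= andbF.
- by case: p {IH} => [|? ?]; rewrite /= andbF.
- by rewrite IH andbA.
Qed.

Lemma ewalk_split x q hs f : ewalk x q hs -> f \in hs ->
  exists q1 z q2 h1 h2, [/\ q = q1 ++ z :: q2, hs = h1 ++ f :: h2, ewalk x q1 h1,
     joins f (last x q1) z & ewalk z q2 h2 /\ f \notin h1].
Proof.
elim: q x hs => [|y q IH] x [|g hs] //= /andP[J E].
rewrite inE; case: (eqVneq f g) => [-> _|nfg /= f_hs].
  by exists [::], y, q, [::], hs.
have [q1 [z [q2 [h1 [h2 [-> -> E1 J1 [E2 N1]]]]]]] := IH _ _ E f_hs.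
exists (y :: q1), z, q2, (g :: h1), h2; split=> //=; first by rewrite J E1.
by rewrite inE negb_or nfg N1.
Qed.

Lemma uniq_size_lt_card x p : uniq (x :: p) -> size p < #|gV G|.
Proof. by move=> /card_uniqP U; have := max_card (mem (x :: p)); rewrite U. Qed.

Lemma geodesic_dist u p v : geodesic adj u p v -> dist u v = size p.
Proof.
case=> Pp Lp Up min_p; have lt_p := uniq_size_lt_card Up.
apply/eqP; rewrite eqn_leq; apply/andP; split.
  apply: (bigmin_le_cond _ _ (mem_index_enum (Ordinal lt_p))).
  apply/cdecP; have [es E] := path_ewalk Pp; exists (u :: p), es; split.
    by apply/is_pathP; exists p.
  by rewrite /= (ewalk_size E).
rewrite /dist; elim/big_ind: _ => [||i /cdecP[_ [es [/is_pathP[q [_ E Uq Lq]] <-]]]].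
- exact: ltnW.
- by move=> m1 m2 H1 H2; rewrite leq_min H1 H2.
- by rewrite -(ewalk_size E); apply: min_p => //; apply: ewalk_path E.
Qed.

Lemma dist_le_diam u v : dist u v <= diam G.
Proof. by apply: (bigmax_sup u) => //; apply: (bigmax_sup v). Qed.

Lemma dist_le_path u q : path adj u q -> dist u (last u q) <= size q.
Proof.
move=> Pq; have [p geo_p] := geodesic_exists (path_connect_last Pq).
by rewrite (geodesic_dist geo_p); case: geo_p => _ _ _; apply.
Qed.

Lemma usp_path_geodesic u v p es : usp_path u v (u :: p) es -> geodesic adj u p v.
Proof.
case=> /is_pathP[_ [[<-] E U L]] min_p; split=> //; first exact: ewalk_path E.
move=> q Pq Lq; case: (shortenP Pq) Lq => q' Pq' Uq' sub_q Lq'.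
have [es' E'] := path_ewalk Pq'.
have /min_p[] : is_path u v (u :: q') es' by apply/is_pathP; exists q'.
rewrite /= ltnS => le_pq' _; have /andP[_ Uq''] := Uq'.
exact: leq_trans le_pq' (uniq_leq_size Uq'' sub_q).
Qed.

Lemma usp_path_size_le u v vs es : usp_path u v vs es -> size vs <= usp G.
Proof.
move=> U; have [/is_pathP[p [E _ Up _]] _] := U.
have lt_vs : size vs < #|gV G|.+1 by rewrite ltnS E; apply: uniq_size_lt_card Up.
apply: (leq_bigmax_cond (Ordinal lt_vs)); apply/cdecP.
by exists u, v, vs, es.
Qed.

Lemma usp_le_card : usp G <= #|gV G|.
Proof. by apply/bigmax_leqP => i _; rewrite -ltnS. Qed.

Lemma usp_geodesic_system :
  exists s, geodesic_system adj s /\ usp G <= system_weight s.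
Proof.
rewrite /usp; elim/big_ind: _ => [|m1 m2|i /cdecP[u [v [vs [es [U <-]]]]]].
- by exists [::].
- by case: (leqP m1 m2) => /=.
case: (U) => /is_pathP[p [Evs _ _ L]] _; rewrite Evs in U *.
exists [:: (u, p)]; split; last by rewrite /system_weight /= addn0.
by split=> //; rewrite L; apply: usp_path_geodesic U.
Qed.

Lemma connected_system_weight s : (forall x y, connect adj x y) ->
  geodesic_system adj s -> system_weight s <= (diam G).+1.
Proof.
case: s => [|[u p] s] conn //= [geo_p avoid_u _].
have -> : s = [::] by case: s avoid_u => // e s /andP[]; rewrite conn.
by rewrite /system_weight /= addn0 ltnS -(geodesic_dist geo_p) dist_le_diam.
Qed.

End Adjacency.
Arguments adj : clear implicits.

Section JoinsTransfer.
Variables (G H : mgraph) (f : gV G -> gV H).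

Lemma joins_map (e : gE G) (e' : gE H) x y :
  joins e' (f (gsrc e)) (f (gdst e)) -> joins e x y -> joins e' (f x) (f y).
Proof. by move=> + /orP[]/andP[/eqP<- /eqP<-] => //; rewrite joinsC. Qed.

Lemma joins_inj (e : gE G) (e' : gE H) x y : injective f ->
  joins e' (f (gsrc e)) (f (gdst e)) -> joins e' (f x) (f y) -> joins e x y.
Proof.
move=> f_inj /orP[]/andP[/eqP E1 /eqP E2] /orP[]/andP[/eqP E3 /eqP E4].
all: rewrite /joins ?(f_inj _ _ (etrans (esym E1) E3)) ?(f_inj _ _ (etrans (esym E2) E4)).
all: by rewrite !eqxx ?orbT.
Qed.

Lemma joins_image (e' : gE H) s d x' y' : joins e' (f s) (f d) -> joins e' x' y' ->
  (x' = f s /\ y' = f d) \/ (x' = f d /\ y' = f s).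
Proof.
by move=> /orP[]/andP[/eqP<- /eqP<-] /orP[]/andP[/eqP-> /eqP->]; [left|right|right|left].
Qed.

Lemma adj_transfer (fe : gE G -> gE H) : injective f -> (forall e', exists e, fe e = e') ->
  (forall e, joins (fe e) (f (gsrc e)) (f (gdst e))) ->
  forall x y, adj G x y = adj H (f x) (f y).
Proof.
move=> f_inj fe_surj J x y; apply/existsP/existsP => -[e Je].
  by exists (fe e); apply: joins_map (J e) Je.
have [e0 Ee0] := fe_surj e; rewrite -Ee0 in Je.
by exists e0; apply: joins_inj f_inj (J e0) Je.
Qed.

End JoinsTransfer.

Lemma bij_surj (T1 T2 : Type) (f : T1 -> T2) : bijective f -> forall y, exists x, f x = y.
Proof. by case=> g _ fK y; exists (g y); rewrite fK. Qed.

Lemma iso_geodesic_system G H : iso G H ->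
  exists s, geodesic_system (adj G) s /\ #|gV G| <= sp H + system_weight s.
Proof.
case=> fv [fe [bv be J]]; have [sH [sys_sH W]] := usp_geodesic_system H.
have [|s [sys_s Ws _]] := geodesic_system_pullback
  (adj_transfer (bij_inj bv) (bij_surj be) J) (fun _ y _ => bij_surj bv y) sys_sH.
  by move=> y _; have [x <-] := bij_surj bv y; apply: codom_f.
exists s; split=> //; rewrite /sp (bij_eq_card bv) Ws.
by have := usp_le_card H; lia.
Qed.

Lemma del_isolated_vertex_geodesic_system G K sK : del_isolated_vertex G K ->
  geodesic_system (adj K) sK -> exists s, geodesic_system (adj G) s /\
    system_weight sK + #|gV G| <= system_weight s + #|gV K|.
Proof.
case=> v0 [fv [fe [v0_isolated [fv_inj fv_neq fv_surj be J]]]] sys_sK.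
have isolated y : ~~ adj K v0 y.
  apply/existsP => -[e]; rewrite /joins.
  by case/andP: (v0_isolated e) => /negbTE-> /negbTE->; rewrite andbF.
have [s' [sys_s' W' from_s']] := geodesic_system_drop_isolated isolated sys_sK.
have fv_closed x y : adj K (fv x) y -> exists x', fv x' = y.
  move=> Axy; apply: fv_surj; apply: contraTneq Axy => ->.
  by rewrite adj_sym isolated.
have [|s [sys_s Ws _]] := geodesic_system_pullback
  (adj_transfer fv_inj (bij_surj be) J) fv_closed sys_s'.
  move=> y /mapP[e e_s' ->]; have [x <-] := fv_surj _ (allP from_s' e e_s').
  exact: codom_f.
have card_K : #|gV K| = #|gV G|.+1.
  have im_fv : fv @: [set: gV G] = [set~ v0].
    apply/setP => y; rewrite !inE.
    by apply/imsetP/idP => [[x _ ->]|/fv_surj[x <-]]; [exact: fv_neq | exists x].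
  have := cardsC1 v0; rewrite -im_fv card_imset // cardsT => ->.
  by rewrite prednK //; apply/card_gt0P; exists v0.
exists s; split=> //; rewrite card_K Ws; lia.
Qed.

Lemma del_edge_geodesic_system G K e0 sK : @del_edge G K e0 ->
  geodesic_system (adj K) sK -> exists s, geodesic_system (adj G) s /\
    system_weight sK + #|gV G| <= system_weight s + #|gV K|.
Proof.
case=> fv [fe [bv fe_inj fe_neq fe_surj J]] sys_sK.
have sub : subrel (adj_del e0) (adj K).
  by move=> x y /existsP[e /andP[_ Je]]; apply/existsP; exists e.
have only_e0 x y : adj K x y -> ~~ adj_del e0 x y ->
    ((x == gsrc e0) && (y == gdst e0)) || ((x == gdst e0) && (y == gsrc e0)).
  move=> /existsP[e Je]; case: (eqVneq e e0) => [Ee | ne]; last first.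
    by case/existsP; exists e; rewrite ne.
  by rewrite Ee in Je; case/orP: Je => /andP[/eqP-> /eqP->]; rewrite !eqxx ?orbT.
have [s' [sys_s' W' _]] := geodesic_system_remove_pair
  (@adj_sym K) (@adj_del_sym K e0) sub only_e0 sys_sK.
have fv_rel x y : adj G x y = adj_del e0 (fv x) (fv y).
  apply/existsP/existsP => -[e Je].
    by exists (fe e); rewrite fe_neq; apply: joins_map (J e) Je.
  case/andP: Je => ne Je; have [e' Ee'] := fe_surj _ ne; rewrite -Ee' in Je.
  by exists e'; apply: joins_inj (bij_inj bv) (J e') Je.
have [|s [sys_s Ws _]] := geodesic_system_pullback
  fv_rel (fun _ y _ => bij_surj bv y) sys_s'.
  by move=> y _; have [x <-] := bij_surj bv y; apply: codom_f.
by exists s; split=> //; rewrite (bij_eq_card bv) Ws leq_add2r.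
Qed.

Definition contraction_map (K G : mgraph) (a b : gV K) (f : gV K -> gV G) :=
  [/\ forall y, exists x, f x = y,
      forall x y, f x = f y -> x = y \/ (x = a /\ y = b) \/ (x = b /\ y = a),
      f a = f b,
      forall x y, adj K x y -> f x = f y \/ adj G (f x) (f y) &
      forall x' y', adj G x' y' -> exists x y, [/\ f x = x', f y = y' & adj K x y]].

Lemma contract_edge_map G K e0 : @contract_edge G K e0 ->
  exists f : gV K -> gV G, contraction_map (gsrc e0) (gdst e0) f.
Proof.
case=> _ [fv [fe [fv_surj [fv_eq [fe_inj fe_neq fe_surj J]]]]].
exists fv; split=> // [x y /fv_eq //||x y /existsP[e Je]|x' y' /existsP[e' Je']].
- by apply/fv_eq; right; left.
- case: (eqVneq e e0) => [Ee | ne].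
    left; apply/fv_eq; right; rewrite Ee in Je.
    by case/orP: Je => /andP[/eqP<- /eqP<-]; [left | right].
  right; have [e' Ee'] := fe_surj _ ne; rewrite -Ee' in Je.
  by apply/existsP; exists e'; apply: joins_map (J e') Je.
- case: (joins_image (J e') Je') => [][-> ->].
    by exists (gsrc (fe e')), (gdst (fe e')); split=> //; apply: adj_ends.
  by exists (gdst (fe e')), (gsrc (fe e')); split=> //; rewrite adj_sym adj_ends.
Qed.

Lemma contraction_map_card (K G : mgraph) (a b : gV K) (f : gV K -> gV G) :
  contraction_map a b f -> a != b -> #|gV K| = #|gV G|.+1.
Proof.
case=> f_surj f_fibre fab _ _ neq_ab.
have im_f : f @: [set~ b] = [set: gV G].
  apply/setP => y; rewrite inE; apply/imsetP; have [x <-] := f_surj y.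
  case: (eqVneq x b) => [->|nxb]; first by exists a; rewrite ?inE.
  by exists x; rewrite ?inE.
have f_inj : {in [set~ b] &, injective f}.
  move=> x y; rewrite !inE => nxb nyb /f_fibre[//|[[_ Eb]|[Eb _]]].
    by rewrite Eb eqxx in nyb.
  by rewrite Eb eqxx in nxb.
have := cardsC1 b; rewrite -(card_in_imset f_inj) im_f cardsT => ->.
by rewrite prednK //; apply/card_gt0P; exists a.
Qed.

Lemma contract_edge_geodesic_system G K e0 sK : @contract_edge G K e0 ->
  geodesic_system (adj K) sK -> exists s, geodesic_system (adj G) s /\
    system_weight sK + #|gV G| <= system_weight s + #|gV K|.
Proof.
move=> /contract_edge_map[f f_contr] sys_sK.
have card_K := contraction_map_card f_contr (gnoloop e0).
case: f_contr => _ f_fibre fab f_rel f_lift.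
have [s [sys_s W _]] := geodesic_system_contract
  (@adj_sym K) (@adj_sym G) f_rel f_lift (adj_ends e0) fab f_fibre sys_sK.
by exists s; split=> //; rewrite card_K; move: W; case: has => /=; lia.
Qed.

Lemma elem_minor_geodesic_system G K sK : elem_minor G K ->
  geodesic_system (adj K) sK -> exists s, geodesic_system (adj G) s /\
    system_weight sK + #|gV G| <= system_weight s + #|gV K|.
Proof.
case=> [|[[e0]|[e0]]]; [exact: del_isolated_vertex_geodesic_system
  | exact: del_edge_geodesic_system | exact: contract_edge_geodesic_system].
Qed.

Lemma minor_geodesic_system G H : minor G H ->
  exists s, geodesic_system (adj G) s /\ #|gV G| <= sp H + system_weight s.
Proof.
elim=> {G H} [G H /iso_geodesic_system //|G K H GK _ [sK [sys_sK W]]].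
have [s [sys_s Ws]] := elem_minor_geodesic_system GK sys_sK.
by exists s; split=> //; lia.
Qed.

Lemma minor_refl G : minor G G.
Proof.
by apply: minor_iso; exists id, id; split; [exists id..|move=> e; apply: joins_ends].
Qed.

Lemma spfloor_le_sp G H : minor G H -> spfloor G <= sp H.
Proof.
by move=> GH; rewrite /spfloor; case: ex_minnP => m _; apply; apply/cdecP; exists H.
Qed.

Lemma spfloor_attained G : exists2 H, minor G H & sp H = spfloor G.
Proof. by rewrite /spfloor; case: ex_minnP => m /cdecP[H [GH <-]] _; exists H. Qed.

Lemma spfloor_elem_minor G' G : elem_minor G' G -> spfloor G' <= spfloor G.
Proof.
move=> G'G; have [H GH <-] := spfloor_attained G.
exact/spfloor_le_sp/(minor_step G'G GH).
Qed.

Lemma card_le_spfloor_diam G : (forall x y, connect (adj G) x y) ->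
  #|gV G| <= spfloor G + (diam G).+1.
Proof.
move=> conn; have [H GH <-] := spfloor_attained G.
have [s [sys_s W]] := minor_geodesic_system GH.
by have := connected_system_weight conn sys_s; lia.
Qed.

Lemma diam_attained G : diam G = 0 \/ exists u v : gV G, dist u v = diam G.
Proof.
rewrite /diam; elim/big_ind: _ => [|m1 m2|u _]; [by left | by case: leqP|].
elim/big_ind: _ => [|m1 m2|v _]; [by left | by case: leqP | by right; exists u, v].
Qed.

Section Bridges.
Variable G : mgraph.
Implicit Types (x y u v : gV G) (p q : seq (gV G)) (e f : gE G) (es fs : seq (gE G)).

Definition all_bridges := forall e, ~~ connect (adj_del e) (gsrc e) (gdst e).

Lemma ewalk_mem x p es f : ewalk x p es -> f \in es ->
  (gsrc f \in x :: p) && (gdst f \in x :: p).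
Proof.
elim: p x es => [|y p IH] x [|g es] //= /andP[J E].
rewrite inE => /orP[/eqP-> | /(IH _ _ E)].
  by case/orP: J => /andP[/eqP-> /eqP->]; rewrite !inE !eqxx ?orbT.
by rewrite !inE => /andP[-> ->]; rewrite !orbT.
Qed.

Lemma ewalk_uniq x p es : ewalk x p es -> uniq (x :: p) -> uniq es.
Proof.
elim: p x es => [|y p IH] x [|e es] //= /andP[J E] /andP[x_notin U].
rewrite (IH _ _ E U) andbT; apply: contra x_notin => /(ewalk_mem E)/andP[].
by case/orP: J => /andP[/eqP-> /eqP->].
Qed.

Lemma joins_other_end e u y y' : joins e u y -> joins e u y' -> y = y'.
Proof.
have nl := gnoloop e.
rewrite /joins => /orP[]/andP[/eqP E1 /eqP E2] /orP[]/andP[/eqP E3 /eqP E4].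
- by rewrite -E2 -E4.
- by move: nl; rewrite E1 E4 eqxx.
- by move: nl; rewrite E3 E2 eqxx.
- by rewrite -E1 -E3.
Qed.

Lemma acyclic_all_bridges : acyclic G -> all_bridges.
Proof.
move=> acyc e; apply/negP => /connectP[p0 P0 L0].
case: (shortenP P0) L0 => q Pq Uq _ Lq; have [es E e_notin] := path_del_ewalk Pq.
have closing x r fs y : ewalk x r fs ->
    all (fun t => joins t.1 t.2.1 t.2.2) (zip (fs ++ [:: e]) (zip (x :: r) (rcons r y)))
    = joins e (last x r) y.
  by elim: r x fs => [|z r IH] x [|f fs] //= => [_|/andP[-> /IH->]]; rewrite ?andbT.
apply: (acyc (gsrc e :: q) (es ++ [:: e])); exists (gsrc e); split=> //.
- by case: q Lq {Pq Uq E} => [/= Lq|//]; have := gnoloop e; rewrite Lq eqxx.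
- by rewrite size_cat /= (ewalk_size E) addn1.
- by rewrite cat_uniq (ewalk_uniq E Uq) /= orbF e_notin.
- by rewrite /= closing // -Lq joinsC joins_ends.
Qed.

Hypothesis bridges : all_bridges.

(* Two distinct first edges at [u] would give a walk from the far end of the
   first one back to [u] avoiding it. *)
Lemma ewalk_unique u p es q fs : ewalk u p es -> uniq (u :: p) ->
  ewalk u q fs -> uniq (u :: q) -> last u p = last u q -> p = q /\ es = fs.
Proof.
elim: p u es q fs => [|y p IH] u [|e es] [|y' q] [|f fs] //=.
- by move=> _ _ _ /andP[u_notin _] Lq; move: u_notin; rewrite Lq mem_last.
- by move=> _ /andP[u_notin _] _ _ Lp; move: u_notin; rewrite -Lp mem_last.
move=> /andP[Je E] /andP[u_p Up] /andP[Jf F] /andP[u_q Uq] L.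
case: (eqVneq e f) => [Eef | nef].
  rewrite -Eef in Jf F *; rewrite -(joins_other_end Je Jf) in F u_q Uq L *.
  by case: (IH _ _ _ _ E Up F Uq L) => -> ->.
exfalso; have e_es : e \notin es.
  have : uniq (e :: es) by apply: (ewalk_uniq (x := u) (p := y :: p)); rewrite /= ?Je ?E ?u_p.
  by case/andP.
have e_fs : e \notin fs.
  apply: contra u_q => /(ewalk_mem F)/andP[].
  by case/orP: Je => /andP[/eqP-> /eqP->].
have symC := sym_connect_sym (@adj_del_sym G e).
have Cuv : connect (adj_del e) u (last u (y' :: q)).
  apply: path_connect_last; apply: (@ewalk_path_del G e u (y' :: q) (f :: fs)).
    by rewrite /= Jf.
  by rewrite inE negb_or nef.
have Cyv : connect (adj_del e) y (last y p) := path_connect_last (ewalk_path_del E e_es).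
have Cuy : connect (adj_del e) u y by apply: connect_trans Cuv _; rewrite symC /= -L.
move: (bridges e); case/orP: Je => /andP[/eqP-> /eqP->]; rewrite ?Cuy //.
by rewrite symC Cuy.
Qed.

Lemma all_bridges_usp_path u v vs es : is_path u v vs es -> usp_path u v vs es.
Proof.
move=> uv; split=> // vs' es' /is_pathP[q [-> F Uq Lq]].
case/is_pathP: uv => p [-> E Up Lp].
by have [-> ->] := ewalk_unique E Up F Uq (etrans Lp (esym Lq)).
Qed.

Hypothesis conn : forall x y, connect (adj G) x y.

Lemma diam_lt_usp : 0 < #|gV G| -> diam G < usp G.
Proof.
case/card_gt0P => x0 _; case: (diam_attained G) => [-> | [u [v <-]]].
  have : is_path x0 x0 [:: x0] [::] by apply/is_pathP; exists [::].
  by move/all_bridges_usp_path/usp_path_size_le.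
have [p geo_p] := geodesic_exists (conn u v); rewrite (geodesic_dist geo_p).
case: (geo_p) => Pp Lp Up _; have [es E] := path_ewalk Pp.
have : is_path u v (u :: p) es by apply/is_pathP; exists p.
by move/all_bridges_usp_path/usp_path_size_le.
Qed.

(* Every path is a unique shortest path, so [G] itself attains the bound of
   [card_le_spfloor_diam]. *)
Lemma spfloor_all_bridges : 0 < #|gV G| -> spfloor G + (diam G).+1 = #|gV G|.
Proof.
move=> G_nonempty; have := card_le_spfloor_diam conn.
have := spfloor_le_sp (minor_refl G); have := diam_lt_usp G_nonempty.
by have := usp_le_card G; rewrite /sp; lia.
Qed.

End Bridges.

Lemma connected_connect G : connected G -> forall x y, connect (adj G) x y.
Proof.
move=> conn x y; have [vs [es /is_pathP[p [_ E _ <-]]]] := conn x y.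
exact/path_connect_last/ewalk_path/E.
Qed.

Lemma contraction_map_connect (K G : mgraph) (a b : gV K) (f : gV K -> gV G) :
  contraction_map a b f -> (forall x y, connect (adj K) x y) ->
  forall x' y', connect (adj G) x' y'.
Proof.
case=> f_surj _ _ f_rel _ conn x' y'.
have [x <-] := f_surj x'; have [y <-] := f_surj y'.
exact: (connect_image f_rel (conn x y)).
Qed.

Lemma contract_edge_all_bridges G K e0 :
  @contract_edge G K e0 -> all_bridges K -> all_bridges G.
Proof.
case=> _ [fv [fe [_ [fv_eq [fe_inj fe_neq _ J]]]]] bridgesK f'.
apply: contra (bridgesK (fe f')) => C.
have lift x' y' : adj_del f' x' y' ->
    exists x y, [/\ fv x = x', fv y = y' & adj_del (fe f') x y].
  move=> /existsP[g' /andP[ng' Jg']].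
  have ng : fe g' != fe f' by apply: contra ng' => /eqP/fe_inj->.
  have del_g x y : joins (fe g') x y -> adj_del (fe f') x y.
    by move=> Jxy; apply/existsP; exists (fe g'); rewrite ng.
  case: (joins_image (J g') Jg') => [][-> ->].
    by exists (gsrc (fe g')), (gdst (fe g')); split=> //; apply/del_g/joins_ends.
  exists (gdst (fe g')), (gsrc (fe g')); split=> //.
  by apply: del_g; rewrite joinsC joins_ends.
have e0_del : adj_del (fe f') (gsrc e0) (gdst e0).
  by apply/existsP; exists e0; rewrite eq_sym fe_neq joins_ends.
have fv_e0 : fv (gsrc e0) = fv (gdst e0) by apply/fv_eq; right; left.
have lifted := connect_preimage (@adj_del_sym K (fe f')) lift e0_del fv_e0
  (fun x y => proj1 (fv_eq x y)).
have symC := sym_connect_sym (@adj_del_sym K (fe f')).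
case: (joins_image (J f') (joins_ends f')) => [][E1 E2].
  by apply: lifted; rewrite -E1 -E2.
by rewrite symC; apply: lifted; rewrite -E1 -E2.
Qed.

Section Contracted.
Variables (T : mgraph) (e : gE T).
Hypothesis no_parallel : forall f, f != e -> ~~ joins f (gsrc e) (gdst e).

(* The vertex [gdst e] is merged into [gsrc e]. *)
Definition contracted_vertex (x : gV T) : {x | x != gdst e} :=
  insubd (exist _ (gsrc e) (gnoloop e)) (if x == gdst e then gsrc e else x).

Lemma val_contracted_vertex x :
  val (contracted_vertex x) = if x == gdst e then gsrc e else x.
Proof. by rewrite /contracted_vertex insubdK //; case: eqVneq => // _; apply: gnoloop. Qed.

Lemma contracted_noloop (f : {f | f != e}) :
  contracted_vertex (gsrc (val f)) != contracted_vertex (gdst (val f)).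
Proof.
apply/negP => /eqP/(congr1 val); rewrite !val_contracted_vertex.
have := no_parallel (valP f); have := gnoloop (val f); rewrite /joins.
case: (eqVneq (gsrc (val f)) (gdst e)) => [->|_];
  case: (eqVneq (gdst (val f)) (gdst e)) => [->|_] //.
- by move=> _ + E; rewrite E !eqxx orbT.
- by move=> _ + E; rewrite -E !eqxx.
- by move=> + _ E; rewrite E eqxx.
Qed.

Definition contracted := MGraph contracted_noloop.

Lemma contracted_contract_edge : @contract_edge contracted T e.
Proof.
split=> //; exists contracted_vertex, val; split.
  move=> y; exists (val y); apply: val_inj.
  by rewrite val_contracted_vertex (negbTE (valP y)).
split.
  move=> a b; split; last first.
    by case=> [->|[][-> ->]] //; apply: val_inj;
      rewrite !val_contracted_vertex eqxx (negbTE (gnoloop e)).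
  move/(congr1 val); rewrite !val_contracted_vertex.
  by do 2 case: eqVneq => [->|_]; move=> //=; [left|right; right|right; left|left].
split=> [|[f nf]|f nf|f] //; first exact: val_inj.
  by exists (exist _ f nf).
exact: joins_ends.
Qed.

End Contracted.

Section Redirect.
Variables (T : mgraph) (e : gE T) (v w : gV T).
Hypothesis neq_vw : v != w.

Definition redirect_src (f : gE T) := if f == e then v else gsrc f.
Definition redirect_dst (f : gE T) := if f == e then w else gdst f.

Lemma redirect_noloop f : redirect_src f != redirect_dst f.
Proof. by rewrite /redirect_src /redirect_dst; case: (f == e) => //; apply: gnoloop. Qed.

Definition redirect := MGraph redirect_noloop.

Lemma joins_redirect f x y : f != e -> @joins redirect f x y = @joins T f x y.
Proof. by move=> nfe; rewrite /joins /= /redirect_src /redirect_dst (negbTE nfe). Qed.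

Lemma joins_redirect_edge x y :
  @joins redirect e x y = ((v == x) && (w == y)) || ((v == y) && (w == x)).
Proof. by rewrite /joins /= /redirect_src /redirect_dst eqxx. Qed.

Lemma ewalk_redirect x p es : e \notin es -> @ewalk redirect x p es = @ewalk T x p es.
Proof.
elim: p x es => [|y p IH] x [|f es] //=; rewrite inE negb_or => /andP[nfe /IH->].
by rewrite joins_redirect // eq_sym.
Qed.

Lemma del_edge_redirect G : @del_edge G T e -> @del_edge G redirect e.
Proof.
case=> fv [fe [bv fe_inj fe_neq fe_surj J]]; exists fv, fe; split=> // f.
by rewrite joins_redirect ?fe_neq.
Qed.

Lemma redirect_usp_path x p es : all_bridges T ->
  ewalk x p es -> e \notin es -> uniq (x :: p) -> last x p = v ->
  ~~ connect (adj_del e) x w -> @usp_path redirect x w (x :: rcons p w) (rcons es e).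
Proof.
move=> bridges E e_es Up Lp Nxw.
have w_p : w \notin x :: p.
  by apply: contra Nxw => /(path_connect (ewalk_path_del E e_es)).
split.
  apply/is_pathP; exists (rcons p w); split=> //.
  - by rewrite ewalk_rcons ewalk_redirect // E Lp joins_redirect_edge !eqxx.
  - by rewrite -rcons_cons rcons_uniq w_p.
  - by rewrite last_rcons.
move=> _ hs /is_pathP[q [-> F Uq Lq]].
suff [-> ->] : q = rcons p w /\ hs = rcons es e by [].
have e_hs : e \in hs.
  apply: contraLR Nxw => e_hs; rewrite negbK; rewrite ewalk_redirect // in F.
  by rewrite -Lq; exact: (path_connect_last (ewalk_path_del F e_hs)).
have [q1 [z [q2 [h1 [h2 [Eq Eh F1 Jz [F2 e_h1]]]]]]] := ewalk_split F e_hs.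
rewrite {}Eq {}Eh {F} in Uq Lq *; rewrite ewalk_redirect // in F1.
move: Uq; rewrite -cat_cons cat_uniq => /and3P[U1 disj U2].
rewrite last_cat /= in Lq; rewrite joins_redirect_edge in Jz.
case/orP: Jz => /andP[/eqP Ev /eqP Ew]; subst z.
  have q2_nil : q2 = [::].
    by case: q2 Lq U2 {F2 disj} => // y q2 /= <- /andP[]; rewrite mem_last.
  subst q2; case: h2 F2 => // _.
  have [-> ->] := ewalk_unique bridges F1 U1 E Up (etrans (esym Ev) (esym Lp)).
  by rewrite !cats1.
case/hasP: disj; exists w; last by rewrite Ew mem_last.
case: q2 Lq {F2 U2} => [/= Evw|y q2 /= <-]; last by rewrite inE mem_last orbT.
by move: neq_vw; rewrite Evw eqxx.
Qed.

End Redirect.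

Lemma path_adj_del_noncollapsing (T : mgraph) (e : gE T) (V : finType) (f : gV T -> V) x p :
  f (gsrc e) = f (gdst e) -> path (adj T) x p ->
  path (fun s t => f s != f t) x p -> path (adj_del e) x p.
Proof.
move=> fe; elim: p x => [|y p IH] x //= /andP[/existsP[g Jg] P] /andP[fxy Q].
rewrite (IH _ P Q) andbT; apply/existsP; exists g; rewrite Jg andbT.
apply: contra fxy => /eqP Eg; subst g.
by case/orP: Jg => /andP[/eqP<- /eqP<-]; rewrite fe.
Qed.

Section ConnectedForest.
Variable T : mgraph.
Hypotheses (bridges : all_bridges T) (conn : forall x y, connect (adj T) x y).

Lemma spfloor_contract_edge G e : @contract_edge G T e ->
  spfloor G + (diam G).+2 = #|gV T|.
Proof.
move=> Ge; have [f f_contr] := contract_edge_map Ge.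
have card_T := contraction_map_card f_contr (gnoloop e).
have G_nonempty : 0 < #|gV G| by apply/card_gt0P; exists (f (gsrc e)).
by rewrite card_T -(spfloor_all_bridges (contract_edge_all_bridges Ge bridges)
  (contraction_map_connect f_contr conn) G_nonempty) addnS.
Qed.

Lemma del_isolated_vertex_empty G : del_isolated_vertex G T -> #|gV G| = 0.
Proof.
case=> v0 [fv [_ [isolated [_ fv_neq _ _ _]]]].
apply/eqP; rewrite -leqn0 leqNgt; apply/negP => /card_gt0P[x' _].
have /connectP[[|y p] /= Pp Ep] := conn v0 (fv x').
  by have := fv_neq x'; rewrite -Ep eqxx.
case/andP: Pp => /existsP[g Jg] _; have := isolated g.
by case/orP: Jg => /andP[/eqP-> /eqP->]; rewrite eqxx /= ?andbF.
Qed.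

Lemma all_bridges_no_parallel (e f : gE T) : f != e -> ~~ joins f (gsrc e) (gdst e).
Proof.
move=> nfe; apply: contra (bridges e) => Jf.
by apply/connect1/existsP; exists f; rewrite nfe.
Qed.

(* Re-attaching [e] at the end of a long path of [T - e] creates a long
   unique shortest path in a graph having [T - e] as a minor. *)
Lemma del_edge_spfloor_path G e x p : @del_edge G T e ->
  path (adj_del e) x p -> uniq (x :: p) -> spfloor G + (size p).+2 <= #|gV T|.
Proof.
move=> Ge Pp Up; have symC := sym_connect_sym (@adj_del_sym T e).
have [w Nw] : exists w, ~~ connect (adj_del e) (last x p) w.
  case: (boolP (connect (adj_del e) (last x p) (gsrc e))) => C; last by exists (gsrc e).
  exists (gdst e); apply: contra (bridges e) => C'.
  by rewrite symC in C; apply: connect_trans C C'.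
have Nxw : ~~ connect (adj_del e) x w.
  by apply: contra Nw; apply: connect_trans; rewrite symC path_connect_last.
have neq_vw : last x p != w by apply: contraNneq Nw => ->; apply: connect0.
have [es E e_es] := path_del_ewalk Pp.
have U := redirect_usp_path neq_vw bridges E e_es Up erefl Nxw.
have := usp_path_size_le U; rewrite /= size_rcons.
have GR : elem_minor G (redirect e neq_vw).
  by right; left; exists e; apply: del_edge_redirect.
have := spfloor_le_sp (minor_step GR (minor_refl _)).
by have := usp_le_card (redirect e neq_vw); rewrite /sp /=; lia.
Qed.

(* A geodesic of [T] through [e] is shortened by the contraction; the others
   are paths of [T - e]. *)
Lemma contract_edge_diam_lt G e : @contract_edge G T e ->
  (forall x p, path (adj_del e) x p -> uniq (x :: p) -> size p < diam T) ->
  diam G < diam T.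
Proof.
move=> Ge short; have [f [f_surj _ fe f_rel _]] := contract_edge_map Ge.
suff dist_lt (x' y' : gV G) : dist x' y' < diam T.
  by case: (diam_attained G) => [->|[u [v <-]]] //; apply: (short (gsrc e) [::]).
have [x <-] := f_surj x'; have [y <-] := f_surj y'.
have [p geo_p] := geodesic_exists (conn x y); have [Pp Lp Up _] := geo_p.
have [q [Pq Lq Sq collapse]] := path_image f_rel Pp.
have := dist_le_path Pq; rewrite Lq Lp => Dq.
have := dist_le_diam x y; rewrite (geodesic_dist geo_p) => Dp.
case: (boolP (path (fun s t => f s != f t) x p)) => [noncollapsing | /collapse].
  by have := short x p (path_adj_del_noncollapsing fe Pp noncollapsing) Up; lia.
by lia.
Qed.

End ConnectedForest.

Theorem theorem4p3 (T : mgraph) :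
  is_tree T ->
  ((exists G' : mgraph, [/\ elem_minor G' T, 0 < #|gV G'| & spfloor G' = spfloor T])
   <->
   (exists (e : gE T) (G' : mgraph), @contract_edge G' T e /\ diam G' < diam T)).
Proof.
case=> T_nonempty [/connected_connect conn /acyclic_all_bridges bridges].
have floor_T := spfloor_all_bridges bridges conn T_nonempty.
split=> [[G' [T_G' G'_nonempty floor_eq]] | [e [G' [Ge lt_diam]]]].
- case: T_G' => [/(del_isolated_vertex_empty conn) G'_empty | [[e Ge] | [e Ge]]].
  + by rewrite G'_empty in G'_nonempty.
  + have no_parallel := @all_bridges_no_parallel T bridges e.
    have Te := contracted_contract_edge no_parallel.
    exists e, (contracted no_parallel); split=> //.
    apply: (contract_edge_diam_lt conn Te) => x p Pp Up.
    by have := del_edge_spfloor_path bridges Ge Pp Up; lia.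
  + exists e, G'; split=> //.
    by have := spfloor_contract_edge bridges conn Ge; lia.
- have T_G' : elem_minor G' T by right; right; exists e.
  have [f [f_surj _ _ _ _]] := contract_edge_map Ge.
  exists G'; split=> //; first by apply/card_gt0P; exists (f (gsrc e)).
  have := spfloor_elem_minor T_G'; have := spfloor_contract_edge bridges conn Ge.
  by lia.
Qed.
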